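(* Let $(X,\|\cdot\|)$ be a finite-dimensional Banach space. Then $X$ is convex if and only if for every sequence $\{v_n\}_{n\in\mathbb{N}}$ of vectors in $X$ such that $\|v_{n+m}\|\le\|v_n+v_m\|$ for all $n,m\in\mathbb{N}$, the limit $\lim_{n\to\infty}\frac{v_n}{n}$ exists.
   Context: $\mathbb{N}=\{1,2,3,\dots\}$. A Banach space $X$ is called convex if for all $u,v\in X$ with $u\neq v$ and $\|u\|=\|v\|=1$ we have $\|u+v\|<2$. *)

From HB Require Import structures.
From mathcomp Require Import all_boot all_order all_algebra.
From mathcomp Require Import all_classical all_reals all_analysis.
Set Implicit Arguments. Unset Strict Implicit. Unset Printing Implicit Defensive.
Import Order.TTheory GRing.Theory Num.Theory.
Import numFieldNormedType.Exports.
Local Open Scope ring_scope.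

Definition finite_dimensional (R : realType) (V : normedModType R) : Prop :=
  exists (n : nat) (e : 'I_n -> V),
    forall v : V, exists c : 'I_n -> R, v = \sum_(i < n) c i *: e i.

(* Paper's definition: X is convex (strictly convex). *)
Definition convex_space (R : realType) (V : normedModType R) : Prop :=
  forall u v : V, u <> v -> `|u| = 1 -> `|v| = 1 -> `|u + v| < 2.

(* In finite dimension the unit sphere is compact, so strict convexity
   upgrades to uniform convexity.  For a sequence with
   [|v (n + m)| <= |v n + v m|] the norms are subadditive, and by Fekete's
   lemma [|v n| / n] tends to [alpha = inf |v n| / n].  If [alpha > 0],
   uniform convexity makes the directions [v n / |v n|] a Cauchy sequence:
   whenever the direction of [v k] is far from that of a large [v j],
   [|v (k + j)| <= |v k + v j|] falls short of [|v k| + |v j|] by a fixed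
   multiple of [j], so the nonnegative excess [|v n| - alpha n] could be
   decreased indefinitely.  Conversely, if distinct unit vectors [u], [w]
   satisfy [|u + w| = 2], the sequence [u, 2w, 3u, 4w, ...] satisfies the
   hypothesis while [v n / n] oscillates between [u] and [w]. *)

From HB Require Import structures.
From mathcomp Require Import all_boot all_order all_algebra.
From mathcomp Require Import all_classical all_reals all_analysis.
From mathcomp Require Import lra.
Import Order.TTheory GRing.Theory Num.Theory.
Import numFieldNormedType.Exports.
Local Open Scope ring_scope.
Local Open Scope classical_set_scope.

Lemma lipschitz_continuous {R : realType} {U W : normedModType R}
    (f : U -> W) (k : R) :
  (forall x y, `|f x - f y| <= k * `|x - y|) -> continuous f.
Proof.
move=> fk x; apply/cvgrPdist_lt => e e0.
have k1 : 0 < `|k| + 1 by rewrite ltr_pwDr.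
near=> y; apply: le_lt_trans (fk x y) _.
apply: (@le_lt_trans _ _ ((`|k| + 1) * `|x - y|)).
  by rewrite ler_wpM2r // (le_trans (ler_norm k)) // lerDl.
rewrite -ltr_pdivlMl //; near: y.
by apply: cvgr_dist_lt; rewrite // mulr_gt0 ?invr_gt0.
Unshelve. all: by end_near. Qed.

Section Basis.
Context {R : realType} {V : normedModType R}.

Definition spanning {n} (e : 'I_n -> V) :=
  forall v : V, exists c : 'I_n -> R, v = \sum_(i < n) c i *: e i.

Definition independent {n} (e : 'I_n -> V) :=
  forall c : 'I_n -> R, \sum_(i < n) c i *: e i = 0 -> forall i, c i = 0.

Lemma exists_basis n (e : 'I_n -> V) : spanning e ->
  exists k (b : 'I_k -> V), spanning b /\ independent b.
Proof.
elim: n e => [|n IH] e spe; first by exists 0%N, e; split => // c _ [].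
have [inde|] := pselect (independent e); first by exists n.+1, e.
move=> /existsNP[c /not_implyP[c0 /existsNP[i /eqP ci]]].
apply: (IH (fun k => e (lift i k))) => v.
have [d ->] := spe v.
exists (fun k => d (lift i k) - d i / c i * c (lift i k)).
move: c0; rewrite !(bigD1_ord i) //= => /eqP; rewrite addr_eq0 => /eqP c0.
have -> : e i = - (c i)^-1 *: \sum_(k < n) c (lift i k) *: e (lift i k).
  by rewrite scaleNr -scalerN -c0 scalerA mulVf ?scale1r.
rewrite scalerA scaler_sumr addrC -big_split /=.
by apply: eq_bigr => k _; rewrite scalerA scalerBl mulrN mulNr scaleNr.
Qed.

End Basis.

Section Coordinates.
Context {R : realType} {V : normedModType R} {n : nat} (e : 'I_n -> V).

Definition lcomb (c : 'rV[R]_n) : V := \sum_(i < n) c ord0 i *: e i.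

Lemma lcomb_spanning : spanning e -> forall v, exists c, v = lcomb c.
Proof.
move=> spe v; have [c ->] := spe v; exists (\row_i c i).
by apply: eq_bigr => i _; rewrite mxE.
Qed.

Lemma lcombZ a c : lcomb (a *: c) = a *: lcomb c.
Proof.
by rewrite /lcomb scaler_sumr; apply: eq_bigr => i _; rewrite mxE scalerA.
Qed.

Lemma coord_norm_le (c : 'rV[R]_n) i : `|c ord0 i| <= `|c|.
Proof.
rewrite [leRHS]/Num.norm /= mx_normrE; apply/bigmax_geP; right.
by exists (ord0, i).
Qed.

Lemma lcomb_lipschitz c c' :
  `|lcomb c - lcomb c'| <= (\sum_(i < n) `|e i|) * `|c - c'|.
Proof.
rewrite /lcomb -sumrB mulr_suml; apply: le_trans (ler_norm_sum _ _ _) _.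
apply: ler_sum => i _; rewrite -scalerBl normrZ mulrC ler_wpM2l //.
by have := coord_norm_le (c - c') i; rewrite !mxE.
Qed.

Lemma lcomb_continuous : continuous lcomb.
Proof. exact: lipschitz_continuous lcomb_lipschitz. Qed.

(* The lower bound is the minimum of [|lcomb c|] on the compact unit sphere
   of ['rV_n], which is positive by independence. *)
Lemma lcomb_lower_bound : independent e ->
  exists2 m, 0 < m & forall c, m * `|c| <= `|lcomb c|.
Proof.
move=> inde; pose S := [set c : 'rV[R]_n | `|c| = 1].
have Snormalize c : c != 0 -> S (`|c|^-1 *: c).
  by move=> c0; rewrite /S /= normrZ normfV normr_id mulVf ?normr_eq0.
have [[c1 Sc1]|S0] := pselect (S !=set0); last first.
  exists 1 => // c; rewrite mul1r.
  have [->|c0] := eqVneq c 0; first by rewrite normr0.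
  by exfalso; apply: S0; exists (`|c|^-1 *: c); apply: Snormalize.
have Scompact : compact S.
  apply: bounded_closed_compact.
    by exists 1; split => // M M1 c; rewrite /S /= => ->; apply: ltW.
  apply: (@preimage_closed _ _ (fun c : 'rV[R]_n => `|c|) [set 1]).
    by move=> c _; apply: norm_continuous.
  exact: closed_eq.
have [c0 /set_mem Sc0 c0min] := compact_EVT_min (ex_intro _ c1 Sc1) Scompact
   (continuous_subspaceT (fun c => cvg_norm (lcomb_continuous c))).
exists `|lcomb c0|.
  rewrite normr_gt0; apply: contraPneq Sc0 => Lc0.
  suff -> : c0 = 0 by rewrite /S /= normr0 => /esym/eqP; rewrite oner_eq0.
  by apply/matrixP => i j; rewrite (ord1 i) mxE (inde _ Lc0).
move=> c; have [->|c_neq0] := eqVneq c 0; first by rewrite normr0 mulr0.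
have := c0min _ (mem_set (Snormalize c c_neq0)).
rewrite lcombZ normrZ normfV normr_id ler_pdivlMl ?normr_gt0 //.
by rewrite mulrC.
Qed.

End Coordinates.

Lemma compact_unit_sphere {R : realType} {V : normedModType R} :
  finite_dimensional V -> compact [set x : V | `|x| = 1].
Proof.
move=> [n [e /exists_basis[k [b [spb indb]]]]].
have [m m0 mle] := lcomb_lower_bound b indb.
pose S := [set c : 'rV[R]_k | `|c| <= m^-1 /\ `|lcomb b c| = 1].
have -> : [set x : V | `|x| = 1] = lcomb b @` S.
  apply/seteqP; split => [x x1|_ [c [_ c1] <-] //].
  have [c xc] := lcomb_spanning b spb x.
  exists c => //; split; last by rewrite -xc.
  by rewrite -(ler_pM2l m0) mulfV ?gt_eqF // -x1 xc mle.
apply: continuous_compact; first exact/continuous_subspaceT/lcomb_continuous.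
apply: bounded_closed_compact.
  exists m^-1; split; first exact: num_real.
  by move=> M M1 c [cm _]; apply: le_trans cm (ltW M1).
apply: closedI.
  apply: (@preimage_closed _ _ (fun c : 'rV[R]_k => `|c|) [set r | r <= m^-1]).
    by move=> c _; apply: norm_continuous.
  exact: closed_le.
apply: (@preimage_closed _ _ (fun c => `|lcomb b c|) [set 1]).
  by move=> c _; exact: cvg_norm (lcomb_continuous b c).
exact: closed_eq.
Qed.

Definition uniformly_convex {R : realType} (V : normedModType R) : Prop :=
  forall eps, 0 < eps -> exists2 rho, 0 < rho &
    forall x y : V, `|x| = 1 -> `|y| = 1 -> eps <= `|x - y| ->
      `|x + y| <= 2 - rho.

Lemma compact_sphere_uniformly_convex {R : realType} {V : normedModType R} :
  convex_space V -> compact [set x : V | `|x| = 1] -> uniformly_convex V.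
Proof.
move=> Vconv Scompact eps eps0.
pose K := [set p : V * V | `|p.1| = 1] `&` [set p | `|p.2| = 1] `&`
          [set p | eps <= `|p.1 - p.2|].
have Kcompact : compact K.
  apply: subclosed_compact (compact_setX Scompact Scompact) _; last first.
    by move=> p [[p1 p2] _].
  apply: closedI; first apply: closedI.
  - apply: (@preimage_closed _ _ (fun p : V * V => `|p.1|) [set 1]).
      by move=> p _; exact: cvg_norm cvg_fst.
    exact: closed_eq.
  - apply: (@preimage_closed _ _ (fun p : V * V => `|p.2|) [set 1]).
      by move=> p _; exact: cvg_norm cvg_snd.
    exact: closed_eq.
  - apply: (@preimage_closed _ _ (fun p : V * V => `|p.1 - p.2|)
      [set r | eps <= r]).
      by move=> p _; exact: cvg_norm (cvgB cvg_fst cvg_snd).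
    exact: closed_ge.
have [[p Kp]|K0] := pselect (K !=set0); last first.
  by exists 1 => // x y x1 y1 xy; exfalso; apply: K0; exists (x, y).
have sum_continuous : continuous (fun p : V * V => `|p.1 + p.2|).
  by move=> q; exact: cvg_norm (cvgD cvg_fst cvg_snd).
have [q /set_mem [[q1 q2] q12] qmax] := compact_EVT_max (ex_intro _ p Kp)
  Kcompact (continuous_subspaceT sum_continuous).
exists (2 - `|q.1 + q.2|).
  rewrite subr_gt0; apply: Vconv => // q12eq.
  by move: q12; rewrite /= q12eq subrr normr0 leNgt eps0.
by move=> x y x1 y1 xy; rewrite subKr; apply: (qmax (x, y)); apply: mem_set.
Qed.

Section Fekete.
Context {R : realType} (a : nat -> R).
Hypothesis a_ge0 : forall n, 0 <= a n.
Hypothesis a_subadd :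
  forall n m, (0 < n)%N -> (0 < m)%N -> a (n + m)%N <= a n + a m.

Lemma subadditive_le_mul k q r : (0 < k)%N -> (0 < r)%N ->
  a (q * k + r)%N <= q%:R * a k + a r.
Proof.
move=> k0 r0; elim: q => [|q IH]; first by rewrite mul0n add0n mul0r add0r.
rewrite mulSn -addnA; apply: le_trans (a_subadd _ _ k0 _) _.
  by rewrite addn_gt0 r0 orbT.
by rewrite mulrSr mulrDl mul1r addrAC addrC lerD2l.
Qed.

Lemma fekete : exists alpha, [/\ 0 <= alpha,
  forall n, (0 < n)%N -> alpha * n%:R <= a n &
  forall d, 0 < d ->
    exists N, forall n, (N <= n)%N -> a n <= (alpha + d) * n%:R].
Proof.
pose S := [set a n / n%:R | n in [set n | (0 < n)%N]].
have S1 : S (a 1%N / 1%:R) by exists 1%N.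
have hS : has_inf S.
  by split; [exists (a 1%N / 1%:R) | exists 0 => _ [n _ <-]; rewrite divr_ge0].
have inf_le n : (0 < n)%N -> inf S * n%:R <= a n.
  by move=> n0; rewrite -ler_pdivlMr ?ltr0n //; apply: (ge_inf hS.2); exists n.
exists (inf S); split => //.
  apply: lb_le_inf => [|_ [n _ <-]]; first by exists (a 1%N / 1%:R).
  exact: divr_ge0.
move=> d d0.
have [_ [k k0 <-] ak] := inf_adherent (divr_gt0 d0 (ltr0n _ 2)) hS.
pose M := \sum_(i < k.+1) a i.
have aM r : (r <= k)%N -> a r <= M.
  move=> rk; rewrite /M (bigD1 (Ordinal (rk : (r < k.+1)%N))) //= lerDl.
  exact: sumr_ge0.
exists (maxn 1 (Num.truncn (2 * M / d)).+1) => n.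
rewrite geq_max => /andP[n1 nM].
(* Euclidean division of [n - 1] by [k], with a remainder in [1, k]. *)
set q := (n.-1 %/ k)%N; set r := (n.-1 %% k).+1.
have nqr : n = (q * k + r)%N by rewrite /q /r addnS -divn_eq prednK.
have an : a n <= q%:R * a k + M.
  rewrite {1}nqr; apply: le_trans (subadditive_le_mul k q r k0 isT) _.
  by rewrite lerD2l aM // ltn_pmod.
have qak : q%:R * a k <= n%:R * (a k / k%:R).
  rewrite mulrCA [leRHS]mulrC ler_wpM2r // ler_pdivlMr ?ltr0n //.
  by rewrite -natrM ler_nat nqr leq_addr.
have Mn : M <= n%:R * (d / 2).
  have : 2 * M / d < n%:R.
    by rewrite -truncn_lt_nat // divr_ge0 ?mulr_ge0 ?sumr_ge0 // ltW.
  rewrite ltr_pdivrMr //; lra.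
have : n%:R * (a k / k%:R) <= n%:R * (inf S + d / 2).
  by rewrite ler_wpM2l // ltW.
lra.
Qed.

End Fekete.

Lemma ratio_cvg {R : realType} (a : nat -> R) (alpha : R) :
  (forall n, (0 < n)%N -> alpha * n%:R <= a n) ->
  (forall d, 0 < d ->
    exists N, forall n, (N <= n)%N -> a n <= (alpha + d) * n%:R) ->
  a n / n%:R @[n --> \oo] --> alpha.
Proof.
move=> lo up; apply/cvgrPdist_le => d d0.
have [N aN] := up d d0; exists (maxn N 1) => // n /=.
rewrite geq_max => /andP[Nn n1].
have n0 : (0 : R) < n%:R by rewrite ltr0n.
have := lo n n1; have := aN n Nn.
rewrite ler_norml lerBrDl -lerBrDr ler_pdivrMr //.
rewrite lerBlDl -lerBlDr ler_pdivlMr //.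
move=> h1 h2; apply/andP; split; lra.
Qed.

Section NormCombinations.
Context {R : realType} {V : normedModType R}.

Lemma norm_combination_deficit (x y : V) (s t m rho : R) :
  `|x| = 1 -> `|y| = 1 -> `|x + y| <= 2 - rho -> 0 <= rho ->
  0 <= m -> m <= s -> m <= t -> `|s *: x + t *: y| <= s + t - rho * m.
Proof.
wlog st : x y s t / s <= t => [hwlog|] x1 y1 xy rho0 m0 ms mt.
  have [|/ltW ts] := leP s t; first by move=> st; apply: hwlog.
  by rewrite addrC [s + t]addrC; apply: hwlog; rewrite // addrC.
have s0 : 0 <= s := le_trans m0 ms.
have -> : s *: x + t *: y = s *: (x + y) + (t - s) *: y.
  by rewrite scalerDr scalerBl -addrA (addrC (s *: y)) subrK.
apply: le_trans (ler_normD _ _) _.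
rewrite !normrZ y1 mulr1 (ger0_norm s0) ger0_norm ?subr_ge0 //.
have : s * `|x + y| <= s * (2 - rho) by rewrite ler_wpM2l.
have : rho * m <= rho * s by rewrite ler_wpM2l.
lra.
Qed.

Lemma norm_combination_ge (x y : V) (s t : R) :
  `|x| = 1 -> `|y| = 1 -> 2 <= `|x + y| -> 0 <= s -> 0 <= t ->
  s + t <= `|s *: x + t *: y|.
Proof.
wlog st : x y s t / s <= t => [hwlog|] x1 y1 xy s0 t0.
  have [|/ltW ts] := leP s t; first by move=> st; apply: hwlog.
  by rewrite addrC [s *: x + _]addrC; apply: hwlog; rewrite // addrC.
have sum_split : t *: (x + y) = (s *: x + t *: y) + (t - s) *: x.
  by rewrite scalerDr scalerBl addrAC subrKC addrC.
have := ler_normD (s *: x + t *: y) ((t - s) *: x).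
rewrite -sum_split !normrZ x1 mulr1 (ger0_norm t0) ger0_norm ?subr_ge0 //.
have : t * 2 <= t * `|x + y| by rewrite ler_wpM2l.
lra.
Qed.

End NormCombinations.

Definition sum_dominated {R : realType} {V : normedModType R} (v : nat -> V) :=
  forall n m, (0 < n)%N -> (0 < m)%N -> `|v (n + m)%N| <= `|v n + v m|.

Lemma cvg_anchored_cauchy {R : realType} {V : completeNormedModType R}
    (u : nat -> V) :
  (forall e, 0 < e -> exists N, forall n, (N <= n)%N -> `|u N - u n| < e) ->
  cvgn u.
Proof.
move=> uC; apply/cauchy_cvgP/cauchy_exP => e e0.
have [N uN] := uC e e0; exists (u N), N => // n /= Nn.
by rewrite -ball_normE; apply: uN.
Qed.

Section ScaledLimit.
Context {R : realType} {V : completeNormedModType R}.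
Variables (v : nat -> V) (alpha : R).
Hypothesis Vuc : uniformly_convex V.
Hypothesis v_dom : sum_dominated v.
Hypothesis alpha_ge0 : 0 <= alpha.
Hypothesis alpha_le : forall n, (0 < n)%N -> alpha * n%:R <= `|v n|.
Hypothesis le_alpha : forall d, 0 < d ->
  exists N, forall n, (N <= n)%N -> `|v n| <= (alpha + d) * n%:R.

Lemma scaled_cvg0 : alpha = 0 -> n%:R^-1 *: v n @[n --> \oo] --> 0.
Proof.
move=> alpha0; apply/cvgrPdist_le => d d0.
have [N vN] := le_alpha _ d0; exists (maxn N 1) => // n /=.
rewrite geq_max => /andP[Nn n0].
rewrite sub0r normrN normrZ normfV ger0_norm // mulrC ler_pdivrMr ?ltr0n //.
by have := vN n Nn; rewrite alpha0 add0r.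
Qed.

Definition direction n := `|v n|^-1 *: v n.

Definition excess n := `|v n| - alpha * n%:R.

Lemma excess_ge0 n : (0 < n)%N -> 0 <= excess n.
Proof. by move=> n0; rewrite subr_ge0 alpha_le. Qed.

Lemma scale_direction n : v n = `|v n| *: direction n.
Proof.
rewrite /direction; have [->|vn0] := eqVneq (v n) 0; first by rewrite !scaler0.
by rewrite scalerA mulfV ?scale1r ?normr_eq0.
Qed.

Section PositiveGrowth.
Hypothesis alpha_gt0 : 0 < alpha.

Lemma direction_norm n : (0 < n)%N -> `|direction n| = 1.
Proof.
move=> n0; have vn0 : 0 < `|v n|.
  by apply: lt_le_trans (alpha_le _ n0); rewrite mulr_gt0 ?ltr0n.
by rewrite normrZ normfV normr_id mulVf ?gt_eqF.
Qed.

Lemma excess_drop (eps rho : R) j k :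
  (forall x y : V, `|x| = 1 -> `|y| = 1 -> eps <= `|x - y| ->
     `|x + y| <= 2 - rho) -> 0 <= rho ->
  (0 < j)%N -> (j <= k)%N -> `|v j| <= (alpha + rho * alpha / 2) * j%:R ->
  eps <= `|direction k - direction j| ->
  excess (k + j) <= excess k - rho * alpha / 2 * j%:R.
Proof.
move=> uc rho0 j0 jk vj far.
have k0 : (0 < k)%N := leq_trans j0 jk.
have [uk uj] := (direction_norm _ k0, direction_norm _ j0).
have deficit : `|v k + v j| <= `|v k| + `|v j| - rho * (alpha * j%:R).
  rewrite {1}[v k]scale_direction {1}[v j]scale_direction.
  apply: norm_combination_deficit => //; first exact: uc.
  - by rewrite mulr_ge0 // ltW.
  - by apply: le_trans (alpha_le _ k0); rewrite ler_wpM2l ?ler_nat // ltW.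
  - exact: alpha_le.
have := le_trans (v_dom _ _ k0 j0) deficit.
move: vj; rewrite /excess natrD; lra.
Qed.

Lemma direction_cauchy eps : 0 < eps ->
  exists N, forall n, (N <= n)%N -> `|direction N - direction n| < eps.
Proof.
move=> eps0; apply: contrapT => /forallNP not_cauchy.
have [rho rho0 uc] := Vuc _ (divr_gt0 eps0 (ltr0n R 2)).
pose c := rho * alpha / 2.
have c0 : 0 < c by rewrite !mulr_gt0.
have [N0 vN0] := le_alpha _ c0; pose N := maxn N0 1.
have N0N : (N0 <= N)%N by rewrite leq_maxl.
have N_gt0 : (0 < N)%N by rewrite leq_maxr.
have [n Nn far] : exists2 n, (N <= n)%N & eps <= `|direction N - direction n|.
  apply: contra_notP (not_cauchy N) => near_N n Nn.
  by rewrite ltNge; apply/negP => far; apply: near_N; exists n.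
(* Every later direction is [eps/2]-far from that of [N] or of [n], so the
   excess can be decreased by [c N] again and again. *)
have drop k : (n <= k)%N ->
    exists2 k', (n <= k')%N & excess k' <= excess k - c * N%:R.
  move=> nk; have Nk := leq_trans Nn nk.
  have [j [Nj jk farj]] : exists j, [/\ (N <= j)%N, (j <= k)%N &
      eps / 2 <= `|direction k - direction j|].
    have [farN|nearN] := lerP (eps / 2) `|direction k - direction N|.
      by exists N.
    have [farn|nearn] := lerP (eps / 2) `|direction k - direction n|.
      by exists n.
    exfalso; have := ler_distD (direction k) (direction N) (direction n).
    by rewrite distrC in nearN; lra.
  exists (k + j)%N; first exact: leq_trans nk (leq_addr _ _).
  apply: le_trans
    (excess_drop _ _ _ _ uc (ltW rho0) (leq_trans N_gt0 Nj) jk _ farj) _.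
    exact/vN0/(leq_trans N0N).
  by rewrite lerD2l lerN2 ler_wpM2l ?ler_nat // ltW.
have descent i :
    exists2 k, (n <= k)%N & excess k <= excess n - i%:R * (c * N%:R).
  elim: i => [|i [k nk ek]]; first by exists n; rewrite ?mul0r ?subr0.
  have [k' nk' ek'] := drop k nk; exists k' => //.
  by move: ek ek'; rewrite -natr1 mulrDl mul1r; lra.
have cN0 : 0 < c * N%:R by rewrite mulr_gt0 ?ltr0n.
have [k nk ek] := descent (Num.truncn (excess n / (c * N%:R))).+1.
have := excess_ge0 _ (leq_trans (leq_trans N_gt0 Nn) nk).
have := truncnS_gt (excess n / (c * N%:R)); rewrite ltr_pdivrMr //.
lra.
Qed.

End PositiveGrowth.

Lemma scaled_cvg : cvgn (fun n => n%:R^-1 *: v n).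
Proof.
have [alpha0|alpha_neq0] := eqVneq alpha 0.
  by apply/cvg_ex; exists 0; apply: scaled_cvg0.
have alpha_gt0 : 0 < alpha by rewrite lt_def alpha_neq0.
have -> : (fun n => n%:R^-1 *: v n) =
    (fun n => (`|v n| / n%:R) *: direction n).
  by apply/funext => n; rewrite {1}scale_direction scalerA mulrC.
apply: is_cvgZ.
  exact: cvgP (ratio_cvg (fun n => `|v n|) alpha alpha_le le_alpha).
exact: cvg_anchored_cauchy (direction_cauchy alpha_gt0).
Qed.

End ScaledLimit.

Lemma convex_of_scaled_cvg {R : realType} {V : normedModType R} :
  (forall v : nat -> V, sum_dominated v -> cvgn (fun n => n%:R^-1 *: v n)) ->
  convex_space V.
Proof.
move=> scaled_cvg u w uw u1 w1; rewrite ltNge; apply/negP => uw2.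
pose s n : R := if odd n then n%:R else 0.
pose t n : R := if odd n then 0 else n%:R.
have st n : s n + t n = n%:R by rewrite /s /t; case: odd; rewrite ?addr0 ?add0r.
have s0 n : 0 <= s n by rewrite /s; case: odd.
have t0 n : 0 <= t n by rewrite /t; case: odd.
pose v n := s n *: u + t n *: w.
have v_dom : sum_dominated v.
  move=> n m _ _; have -> : v n + v m = (s n + s m) *: u + (t n + t m) *: w.
    by rewrite /v !scalerDl addrACA.
  apply: le_trans (norm_combination_ge _ _ _ _ u1 w1 uw2
    (addr_ge0 (s0 n) (s0 m)) (addr_ge0 (t0 n) (t0 m))).
  apply: le_trans (ler_normD _ _) _.
  rewrite !normrZ u1 w1 !mulr1 !ger0_norm //.
  by have := st n; have := st m; have := st (n + m)%N; rewrite natrD; lra.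
have /cvg_ex[l vl] := scaled_cvg v v_dom.
have uw_gt0 : 0 < `|u - w| / 2.
  by rewrite divr_gt0 // normr_gt0 subr_eq0; apply/eqP.
have [N _ near_l] := (proj1 (cvgrPdist_lt _ _)) vl _ uw_gt0.
have N_odd : (N <= N.*2.+1)%N by rewrite -addnn -addSn leq_addl.
have lu : `|l - u| < `|u - w| / 2.
  have := near_l _ N_odd => /=.
  by rewrite /v /s /t /= odd_double /= scale0r addr0 scalerA mulVf ?scale1r.
have lw : `|l - w| < `|u - w| / 2.
  have := near_l _ (leq_trans N_odd (leqnSn _)) => /=.
  by rewrite /v /s /t /= odd_double /= scale0r add0r scalerA mulVf ?scale1r.
have := ler_distD l u w; rewrite (distrC u l); lra.
Qed.

Theorem mainTheorem2 (R : realType) (V : completeNormedModType R) :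
  finite_dimensional V ->
  (convex_space V <->
   forall v : nat -> V,
     (forall n m : nat, (0 < n)%N -> (0 < m)%N -> `|v (n + m)%N| <= `|v n + v m|) ->
     cvgn (fun n : nat => (n%:R)^-1 *: v n)).
Proof.
move=> Vfin; split; last exact: convex_of_scaled_cvg.
move=> Vconv v v_dom.
have Vuc := compact_sphere_uniformly_convex Vconv (compact_unit_sphere Vfin).
have v_subadd n m : (0 < n)%N -> (0 < m)%N -> `|v (n + m)%N| <= `|v n| + `|v m|.
  by move=> n0 m0; apply: le_trans (v_dom n m n0 m0) (ler_normD _ _).
have [alpha [alpha_ge0 alpha_le le_alpha]] :=
  fekete (fun n => `|v n|) (fun n => normr_ge0 (v n)) v_subadd.
exact: scaled_cvg v alpha Vuc v_dom alpha_ge0 alpha_le le_alpha.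
Qed.
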